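(* Let $m,n,k$ be positive integers. Then \begin{align*} |\mathrm{WHom}(P_m,P_{n}\square P_{k})|=&\,4\sum_{i=0}^{\lfloor n/2\rfloor-1}\sum_{j=0}^{\lfloor k/2\rfloor-1}|\mathrm{WHom}^{ij}(P_m,P_{n}\square P_{k})| +(1-(-1)^n)\sum_{j=0}^{\lfloor k/2\rfloor-1}|\mathrm{WHom}^{\lfloor n/2\rfloor j}(P_m,P_{n}\square P_{k})|\\ &+(1-(-1)^k)\sum_{i=0}^{\lfloor n/2\rfloor-1}|\mathrm{WHom}^{i\lfloor k/2\rfloor}(P_m,P_{n}\square P_{k})| +\tfrac14(1-(-1)^n)(1-(-1)^k)\,|\mathrm{WHom}^{\lfloor n/2\rfloor\lfloor k/2\rfloor}(P_m,P_{n}\square P_{k})|, \end{align*} where, for $0\le i\le n-1$ and $0\le j\le k-1$, $$|\mathrm{WHom}^{ij}(P_m,P_n\square P_k)|=\sum_{h=0}^{m-1}\binom{m-1}{h}\,|\mathrm{Hom}^i(P_{h+1},P_n)|\,|\mathrm{WHom}^j(P_{m-h},P_k)|.$$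
   Context: For a positive integer $n$, $P_n$ denotes the path with vertex set $\{0,1,\dots,n-1\}$ and edge set $\{\{i,i+1\} : i=0,\dots,n-2\}$. The Cartesian product $P_n\square P_k$ has vertex set $\{0,\dots,n-1\}\times\{0,\dots,k-1\}$, with $\{(a,u),(b,v)\}$ an edge iff either $a=b$ and $\{u,v\}\in E(P_k)$, or $\{a,b\}\in E(P_n)$ and $u=v$. A homomorphism $f:G\to H$ is a map $V(G)\to V(H)$ with $\{f(x),f(y)\}\in E(H)$ for all $\{x,y\}\in E(G)$; a weak homomorphism is a map with $f(x)=f(y)$ or $\{f(x),f(y)\}\in E(H)$ for all $\{x,y\}\in E(G)$. $\mathrm{WHom}(G,H)$ is the set of weak homomorphisms from $G$ to $H$. $\mathrm{Hom}^i(P_a,P_n)$ is the set of homomorphisms $f:P_a\to P_n$ with $f(0)=i$; $\mathrm{WHom}^j(P_a,P_k)$ is the set of weak homomorphisms $f:P_a\to P_k$ with $f(0)=j$; $\mathrm{WHom}^{ij}(P_m,P_n\square P_k)$ is the set of weak homomorphisms $f:P_m\to P_n\square P_k$ with $f(0)=(i,j)$. *)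

From mathcomp Require Import all_boot all_order all_algebra.
Set Implicit Arguments. Unset Strict Implicit. Unset Printing Implicit Defensive.

Definition pathrel (n : nat) : rel 'I_n :=
  fun a b => (a.+1 == b :> nat) || (b.+1 == a :> nat).

Definition boxrel (n k : nat) : rel ('I_n * 'I_k) :=
  fun u v => ((u.1 == v.1) && pathrel u.2 v.2) || (pathrel u.1 v.1 && (u.2 == v.2)).

Definition is_hom (T U : finType) (G : rel T) (H : rel U) (f : T -> U) : bool :=
  [forall x, forall y, G x y ==> H (f x) (f y)].
Definition is_whom (T U : finType) (G : rel T) (H : rel U) (f : T -> U) : bool :=
  [forall x, forall y, G x y ==> ((f x == f y) || H (f x) (f y))].

Definition nWHom_grid (m n k : nat) : nat :=
  #|[set f : {ffun 'I_m -> 'I_n * 'I_k} | is_whom (@pathrel m) (@boxrel n k) f]|.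

Definition nWHom_grid_at (m n k i j : nat) : nat :=
  #|[set f : {ffun 'I_m -> 'I_n * 'I_k} | is_whom (@pathrel m) (@boxrel n k) f &&
     [exists x : 'I_m, [&& val x == 0, val (f x).1 == i & val (f x).2 == j]]]|.

Definition nHom_at (a n i : nat) : nat :=
  #|[set f : {ffun 'I_a -> 'I_n} | is_hom (@pathrel a) (@pathrel n) f &&
     [exists x : 'I_a, (val x == 0) && (val (f x) == i)]]|.

Definition nWHom_at (a k j : nat) : nat :=
  #|[set f : {ffun 'I_a -> 'I_k} | is_whom (@pathrel a) (@pathrel k) f &&
     [exists x : 'I_a, (val x == 0) && (val (f x) == j)]]|.

From mathcomp Require Import all_boot all_order all_algebra.
From mathcomp Require Import zify ring.
Import GRing.Theory.
Set Implicit Arguments. Unset Strict Implicit. Unset Printing Implicit Defensive.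

(* A weak homomorphism P_m -> G is a walk with m - 1 steps in G with a loop
   added at every vertex (a lazy walk), so every count in the statement is a
   number of walks.  A step of a lazy walk in P_n [] P_k either moves the
   first coordinate, or moves or stays in the second one; choosing which h of
   the m - 1 steps move the first coordinate gives the binomial convolution,
   and both sides satisfy the same Pascal-type recurrence.  The first formula
   only uses that the number of walks from (i, j) is invariant under the
   reflections i |-> n - 1 - i and j |-> k - 1 - j, which fold each sum over
   a row or column into twice its first half plus its middle term. *)

Section Walks.
Variables (U : finType) (R : rel U).

Definition is_walk m (f : {ffun 'I_m -> U}) : bool :=
  [forall x : 'I_m, forall y : 'I_m, (x.+1 == y :> nat) ==> R (f x) (f y)].

Fixpoint nwalks (m : nat) (v : U) : nat :=
  if m is m'.+1 then \sum_(u | R v u) nwalks m' u else 1.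

Definition walks_from m v :=
  [set f : {ffun 'I_m.+1 -> U} | is_walk f && (f ord0 == v)].

Definition cons_walk m v (g : {ffun 'I_m.+1 -> U}) : {ffun 'I_m.+2 -> U} :=
  [ffun x => if unlift ord0 x is Some y then g y else v].

Definition behead_walk m (f : {ffun 'I_m.+2 -> U}) : {ffun 'I_m.+1 -> U} :=
  [ffun x => f (lift ord0 x)].

Lemma cons_walk0 m v g : @cons_walk m v g ord0 = v.
Proof. by rewrite ffunE unlift_none. Qed.

Lemma cons_walkS m v g y : @cons_walk m v g (lift ord0 y) = g y.
Proof. by rewrite ffunE liftK. Qed.

Lemma cons_walk_inj m v : injective (@cons_walk m v).
Proof. by move=> g1 g2 e; apply/ffunP => x; rewrite -(cons_walkS v g1) e cons_walkS. Qed.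

Lemma behead_walkK m (f : {ffun 'I_m.+2 -> U}) : cons_walk (f ord0) (behead_walk f) = f.
Proof.
by apply/ffunP => x; case: (unliftP ord0 x) => [y ->|->];
  rewrite ?cons_walk0 ?cons_walkS ?ffunE.
Qed.

Lemma is_walk_cons m v g : is_walk (@cons_walk m v g) = R v (g ord0) && is_walk g.
Proof.
apply/idP/idP => [/forallP W | /andP[Rv /forallP W]].
  apply/andP; split.
    by have := forallP (W ord0) (lift ord0 ord0); rewrite cons_walk0 cons_walkS; apply.
  apply/forallP => x; apply/forallP => y; apply/implyP => xy.
  have := forallP (W (lift ord0 x)) (lift ord0 y).
  by rewrite !cons_walkS /= /bump !add1n eqSS xy; apply.
apply/forallP => x; apply/forallP => y; apply/implyP.
case: (unliftP ord0 x) => [x' ->|->]; case: (unliftP ord0 y) => [y' ->|->];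
  rewrite ?cons_walk0 ?cons_walkS /= /bump ?add1n //.
- by rewrite eqSS => xy; have := forallP (W x') y'; rewrite xy; apply.
- by move=> y'0; rewrite (_ : y' = ord0); last by apply/val_inj => /=; lia.
Qed.

Lemma walks_from0 v : walks_from 0 v = [set [ffun=> v]].
Proof.
apply/setP => f; rewrite !inE; apply/andP/eqP => [[_ /eqP <-] | ->].
  by apply/ffunP => x; rewrite ffunE ord1.
split; last by rewrite ffunE.
by apply/forallP => x; apply/forallP => y; rewrite !ord1.
Qed.

Lemma walks_fromS m v :
  walks_from m.+1 v = cons_walk v @: [set g : {ffun 'I_m.+1 -> U} | R v (g ord0) && is_walk g].
Proof.
apply/setP => f; rewrite !inE; apply/andP/imsetP => [[Wf /eqP f0] | [g + ->]].
  exists (behead_walk f); last by rewrite -f0 behead_walkK.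
  by rewrite inE -is_walk_cons -f0 behead_walkK.
by rewrite inE -is_walk_cons cons_walk0 => ->.
Qed.

Lemma card_walks_from m v : #|walks_from m v| = nwalks m v.
Proof.
elim: m v => [|m IH] v; first by rewrite walks_from0 cards1.
rewrite walks_fromS card_imset; last exact: cons_walk_inj.
rewrite -sum1_card (partition_big (fun g : {ffun 'I_m.+1 -> U} => g ord0) (R v)) /=;
  last first.
  by move=> g; rewrite inE => /andP[].
apply: eq_bigr => u Ru; rewrite -IH -sum1_card; apply: eq_bigl => g.
by rewrite !inE; case: eqP => [->|]; rewrite ?Ru ?andbF.
Qed.

Lemma nwalks_invariant (s : U -> U) : injective s ->
  (forall a b, R (s a) (s b) = R a b) -> forall m v, nwalks m (s v) = nwalks m v.
Proof.
move=> s_inj sR; elim=> [|m IH] v //=.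
by rewrite (reindex_inj s_inj); apply: eq_big => u; rewrite ?sR ?IH.
Qed.

End Walks.

Definition refl_closure (T : eqType) (r : rel T) : rel T :=
  fun x y => (x == y) || r x y.

Definition box_rel (I J : eqType) (p : rel I) (q : rel J) : rel (I * J) :=
  fun u v => ((u.1 == v.1) && q u.2 v.2) || (p u.1 v.1 && (u.2 == v.2)).

Lemma sum_binomialS (F : nat -> nat) M :
  \sum_(0 <= h < M.+2) 'C(M.+1, h) * F h =
  \sum_(0 <= h < M.+1) 'C(M, h) * F h + \sum_(0 <= h < M.+1) 'C(M, h) * F h.+1.
Proof.
have drop_last : \sum_(0 <= h < M.+1) 'C(M, h) * F h = \sum_(0 <= h < M.+2) 'C(M, h) * F h.
  by rewrite [RHS]big_nat_recr //= bin_small // mul0n addn0.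
rewrite drop_last big_nat_recl // [X in _ = X + _]big_nat_recl // !bin0 -addnA.
congr (_ + _).
by under eq_bigr do rewrite binS mulnDl; rewrite big_split.
Qed.

Lemma nwalks_refl_closureS (T : finType) (r : rel T) : irreflexive r -> forall a x,
  nwalks (refl_closure r) a.+1 x =
  nwalks (refl_closure r) a x + \sum_(y | r x y) nwalks (refl_closure r) a y.
Proof.
move=> r_irr a x; rewrite /= (bigD1 x) /refl_closure ?eqxx //=; congr (_ + _).
apply: eq_bigl => y; case: (eqVneq x y) => [<-|/negbTE ne]; first by rewrite r_irr.
by rewrite andbT.
Qed.

Section LazyBoxWalks.
Variables (I J : finType) (p : rel I) (q : rel J).
Hypotheses (p_irr : irreflexive p) (q_irr : irreflexive q).


Lemma sum_box_rel (F : I * J -> nat) i j :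
  \sum_(v | box_rel p q (i, j) v) F v =
  \sum_(i' | p i i') F (i', j) + \sum_(j' | q j j') F (i, j').
Proof.
rewrite (eq_bigr (fun v => F (v.1, v.2))) => [|[] //].
rewrite (eq_bigl (fun v => predT v.1 && box_rel p q (i, j) (v.1, v.2))) => [|[] //].
rewrite -(pair_big_dep predT (fun a b => box_rel p q (i, j) (a, b)) (fun a b => F (a, b))).
rewrite (bigD1 i) //= addnC; congr (_ + _); last first.
  by apply: eq_bigl => b; rewrite /box_rel /= eqxx p_irr orbF.
transitivity (\sum_(a | a != i) (if p i a then F (a, j) else 0)).
  apply: eq_bigr => a ai; rewrite /box_rel /= eq_sym (negbTE ai) /=.
  case: ifP => _; last exact: big_pred0.
  by apply: big_pred1 => b; rewrite /= eq_sym.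
rewrite -big_mkcondr; apply: eq_bigl => a.
by case: (eqVneq a i) => [->|]; rewrite ?p_irr.
Qed.

Let W := nwalks (refl_closure q).
Let G := nwalks (refl_closure (box_rel p q)).

Lemma nwalks_lazy_boxS M i j :
  G M.+1 (i, j) =
  G M (i, j) + \sum_(i' | p i i') G M (i', j) + \sum_(j' | q j j') G M (i, j').
Proof.
have box_irr : irreflexive (box_rel p q) by move=> u; rewrite /box_rel p_irr q_irr !andbF.
by rewrite /G nwalks_refl_closureS // sum_box_rel addnA.
Qed.

Lemma nwalks_lazy_box M i j :
  G M (i, j) = \sum_(0 <= h < M.+1) 'C(M, h) * nwalks p h i * W (M - h) j.
Proof.
elim: M i j => [|M IH] i j; first by rewrite big_nat1.
have step_first : \sum_(i' | p i i') G M (i', j) =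
    \sum_(0 <= h < M.+1) 'C(M, h) * (nwalks p h.+1 i * W (M - h) j).
  under eq_bigr do rewrite IH.
  rewrite exchange_big; apply: eq_bigr => h _.
  rewrite [nwalks p h.+1 i]/= big_distrl big_distrr /=.
  by apply: eq_bigr => i' _; rewrite mulnA.
have step_second : G M (i, j) + \sum_(j' | q j j') G M (i, j') =
    \sum_(0 <= h < M.+1) 'C(M, h) * (nwalks p h i * W (M.+1 - h) j).
  under eq_bigr do rewrite IH.
  rewrite IH exchange_big -big_split; apply: eq_big_nat => h /andP[_ hM].
  rewrite subSn // /W nwalks_refl_closureS // !mulnDr !big_distrr /= mulnA.
  by congr (_ + _); apply: eq_bigr => j' _; rewrite mulnA.
rewrite nwalks_lazy_boxS addnAC step_second step_first.
under [RHS]eq_bigr do rewrite -mulnA.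
by rewrite sum_binomialS.
Qed.

End LazyBoxWalks.

Lemma box_rel_sym (I J : eqType) (p : rel I) (q : rel J) :
  symmetric p -> symmetric q -> symmetric (box_rel p q).
Proof.
by move=> p_sym q_sym [a1 a2] [b1 b2]; rewrite /box_rel /= p_sym q_sym eq_sym [a2 == _]eq_sym.
Qed.

Lemma nwalks_lazy_box_map (I J : finType) (p : rel I) (q : rel J) (s : I -> I) (t : J -> J) :
  injective s -> injective t ->
  (forall a b, p (s a) (s b) = p a b) -> (forall a b, q (t a) (t b) = q a b) ->
  forall M i j, nwalks (refl_closure (box_rel p q)) M (s i, t j) =
                nwalks (refl_closure (box_rel p q)) M (i, j).
Proof.
move=> s_inj t_inj sp tq M i j.
apply: (@nwalks_invariant _ _ (fun u => (s u.1, t u.2)) _ _ M (i, j)).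
  by move=> [a1 a2] [b1 b2] /= [/s_inj -> /t_inj ->].
move=> [a1 a2] [b1 b2]; rewrite /refl_closure /box_rel /= sp tq.
by rewrite !xpair_eqE !inj_eq.
Qed.

Lemma sum_palindrome (F : nat -> nat) n :
  (forall i, i < n -> F (n.-1 - i) = F i) ->
  \sum_(0 <= i < n) F i = 2 * \sum_(0 <= i < n./2) F i + odd n * F n./2.
Proof.
move=> Fsym; have n_split : n = n./2 + odd n + n./2.
  by have := odd_double_half n; rewrite -addnn; lia.
have middle : \sum_(n./2 <= i < n./2 + odd n) F i = odd n * F n./2.
  by case: (odd n) => /=; rewrite ?addn1 ?big_nat1 ?mul1n ?addn0 ?big_geq.
have upper : \sum_(n./2 + odd n <= i < n) F i = \sum_(0 <= i < n./2) F i.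
  rewrite -{1}(add0n (n./2 + odd n)) big_addn big_nat_rev.
  rewrite (_ : n - (n./2 + odd n) = n./2); last lia.
  by apply: eq_big_nat => i /andP[_ hi]; rewrite -Fsym; [congr F | ]; lia.
rewrite (big_cat_nat _ (n := n./2)) ?leq0n //=; last lia.
rewrite [X in _ + X](big_cat_nat _ (n := n./2 + odd n)) ?leq_addr //=; last lia.
by rewrite middle upper; lia.
Qed.

Lemma sum2_palindrome (F : nat -> nat -> nat) n k :
  (forall i j, i < n -> j < k -> F (n.-1 - i) j = F i j) ->
  (forall i j, i < n -> j < k -> F i (k.-1 - j) = F i j) ->
  \sum_(0 <= i < n) \sum_(0 <= j < k) F i j =
  4 * \sum_(0 <= i < n./2) \sum_(0 <= j < k./2) F i j
  + 2 * odd n * \sum_(0 <= j < k./2) F n./2 j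
  + 2 * odd k * \sum_(0 <= i < n./2) F i k./2
  + odd n * odd k * F n./2 k./2.
Proof.
move=> Fsym1 Fsym2.
have half_le : n./2 <= n by have := odd_double_half n; rewrite -addnn; lia.
have rows i : i < n ->
    \sum_(0 <= j < k) F i j = 2 * \sum_(0 <= j < k./2) F i j + odd k * F i k./2.
  by move=> hi; apply: sum_palindrome => j hj; apply: Fsym2.
rewrite sum_palindrome => [|i hi]; last first.
  by apply: eq_big_nat => j /andP[_ hj]; apply: Fsym1.
have middle_row : odd n * \sum_(0 <= j < k) F n./2 j =
    odd n * (2 * \sum_(0 <= j < k./2) F n./2 j + odd k * F n./2 k./2).
  case: (boolP (odd n)) => [odd_n | _] //; rewrite rows //.
  by have := odd_double_half n; rewrite odd_n -addnn; lia.
rewrite middle_row (eq_big_nat _ _ (F2 := fun i =>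
    2 * \sum_(0 <= j < k./2) F i j + odd k * F i k./2)) => [|i /andP[_ hi]]; last first.
  by apply: rows; lia.
rewrite big_split /= -!big_distrr /=; ring.
Qed.

Lemma pathrel_irr n : irreflexive (@pathrel n).
Proof. by move=> a; rewrite /pathrel; apply/negbTE; lia. Qed.

Lemma pathrel_sym n : symmetric (@pathrel n).
Proof. by move=> a b; rewrite /pathrel orbC. Qed.

Lemma pathrel_rev n (a b : 'I_n) : pathrel (rev_ord a) (rev_ord b) = pathrel a b.
Proof.
by case: a b => [a ha] [b hb]; rewrite /pathrel /=; apply/idP/idP; lia.
Qed.

Lemma refl_closure_sym (T : eqType) (r : rel T) :
  symmetric r -> symmetric (refl_closure r).
Proof. by move=> r_sym x y; rewrite /refl_closure eq_sym r_sym. Qed.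

Lemma is_hom_path (U : finType) (H : rel U) m (f : {ffun 'I_m -> U}) :
  symmetric H -> is_hom (@pathrel m) H f = is_walk H f.
Proof.
move=> H_sym; apply/forallP/forallP => W x; apply/forallP => y; apply/implyP.
  by move=> xy; have := forallP (W x) y; rewrite /pathrel xy; apply.
case/orP => [xy | yx]; first by have := forallP (W x) y; rewrite xy; apply.
by rewrite H_sym; have := forallP (W y) x; rewrite yx; apply.
Qed.

Lemma is_whom_path (U : finType) (H : rel U) m (f : {ffun 'I_m -> U}) :
  symmetric H -> is_whom (@pathrel m) H f = is_walk (refl_closure H) f.
Proof. by move=> H_sym; rewrite -is_hom_path //; apply: refl_closure_sym. Qed.

Lemma ex_ord0 a (P : pred 'I_a.+1) : [exists x, (val x == 0) && P x] = P ord0.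
Proof.
apply/existsP/idP => [[x /andP[/eqP x0]] | P0]; last by exists ord0.
by rewrite (_ : x = ord0) //; apply: val_inj.
Qed.

Local Notation lazy_grid n k := (refl_closure (box_rel (@pathrel n) (@pathrel k))).

Lemma nHom_at_nwalks h n i (hi : i < n) :
  nHom_at h.+1 n i = nwalks (@pathrel n) h (Ordinal hi).
Proof.
rewrite /nHom_at -card_walks_from; apply: eq_card => f.
rewrite !inE is_hom_path ?ex_ord0; last exact: pathrel_sym.
by congr (_ && _); apply/eqP/eqP => [e|-> //]; apply: val_inj.
Qed.

Lemma nWHom_at_nwalks a k j (hj : j < k) :
  nWHom_at a.+1 k j = nwalks (refl_closure (@pathrel k)) a (Ordinal hj).
Proof.
rewrite /nWHom_at -card_walks_from; apply: eq_card => f.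
rewrite !inE is_whom_path ?ex_ord0; last exact: pathrel_sym.
by congr (_ && _); apply/eqP/eqP => [e|-> //]; apply: val_inj.
Qed.

Lemma nWHom_grid_at_nwalks M n k i j (hi : i < n) (hj : j < k) :
  nWHom_grid_at M.+1 n k i j = nwalks (lazy_grid n k) M (Ordinal hi, Ordinal hj).
Proof.
rewrite /nWHom_grid_at -card_walks_from; apply: eq_card => f.
rewrite !inE is_whom_path ?ex_ord0; last exact: box_rel_sym (@pathrel_sym n) (@pathrel_sym k).
by congr (_ && _); case: (f ord0) => a b.
Qed.

Lemma nWHom_grid_sum M n k :
  nWHom_grid M.+1 n k = \sum_(0 <= i < n) \sum_(0 <= j < k) nWHom_grid_at M.+1 n k i j.
Proof.
transitivity (\sum_(i < n) \sum_(j < k) nwalks (lazy_grid n k) M (i, j)).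
  rewrite /nWHom_grid -sum1_card pair_big /=.
  rewrite (partition_big (fun f : {ffun 'I_M.+1 -> 'I_n * 'I_k} => f ord0) predT) //=.
  apply: eq_bigr => -[i j] _; rewrite -card_walks_from -sum1_card.
  apply: eq_bigl => f; rewrite !inE is_whom_path //.
  exact: box_rel_sym (@pathrel_sym n) (@pathrel_sym k).
rewrite big_mkord; apply: eq_bigr => i _; rewrite big_mkord; apply: eq_bigr => j _.
rewrite (nWHom_grid_at_nwalks M (ltn_ord i) (ltn_ord j)).
by congr nwalks; congr pair; apply: val_inj.
Qed.

Lemma nWHom_grid_at_rev1 M n k i j : i < n -> j < k ->
  nWHom_grid_at M.+1 n k (n.-1 - i) j = nWHom_grid_at M.+1 n k i j.
Proof.
move=> hi hj; have hi' : n.-1 - i < n by lia.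
rewrite (nWHom_grid_at_nwalks M hi' hj) (nWHom_grid_at_nwalks M hi hj).
have -> : Ordinal hi' = rev_ord (Ordinal hi) by apply: val_inj => /=; lia.
exact: (nwalks_lazy_box_map (t := id) rev_ord_inj (@inj_id _) (@pathrel_rev n)).
Qed.

Lemma nWHom_grid_at_rev2 M n k i j : i < n -> j < k ->
  nWHom_grid_at M.+1 n k i (k.-1 - j) = nWHom_grid_at M.+1 n k i j.
Proof.
move=> hi hj; have hj' : k.-1 - j < k by lia.
rewrite (nWHom_grid_at_nwalks M hi hj') (nWHom_grid_at_nwalks M hi hj).
have -> : Ordinal hj' = rev_ord (Ordinal hj) by apply: val_inj => /=; lia.
exact: (nwalks_lazy_box_map (s := id) (@inj_id _) rev_ord_inj _ (@pathrel_rev k)).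
Qed.

Local Open Scope ring_scope.

Lemma one_sub_signr_odd l : 1 - (-1) ^+ l = 2 * (odd l)%:R :> rat.
Proof.
by rewrite -signr_odd; case: (odd l); rewrite /= ?expr1 ?expr0 ?subrr ?mulr0 ?mulr1 ?opprK.
Qed.

Theorem theorem4 (m n k : nat) (hm : (0 < m)%N) (hn : (0 < n)%N) (hk : (0 < k)%N) :
  ((nWHom_grid m n k)%:R : rat) =
    4 * \sum_(0 <= i < n./2) \sum_(0 <= j < k./2) (nWHom_grid_at m n k i j)%:R
    + (1 - (-1) ^+ n) * \sum_(0 <= j < k./2) (nWHom_grid_at m n k n./2 j)%:R
    + (1 - (-1) ^+ k) * \sum_(0 <= i < n./2) (nWHom_grid_at m n k i k./2)%:R
    + 4^-1 * (1 - (-1) ^+ n) * (1 - (-1) ^+ k) * (nWHom_grid_at m n k n./2 k./2)%:R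
  /\
  (forall i j : nat, (i < n)%N -> (j < k)%N ->
     nWHom_grid_at m n k i j =
       \sum_(0 <= h < m) 'C(m.-1, h) * nHom_at h.+1 n i * nWHom_at (m - h) k j)%N.
Proof.
case: m hm => // M _; split; last first.
  move=> i j hi hj; rewrite (nWHom_grid_at_nwalks M hi hj) nwalks_lazy_box.
  - apply: eq_big_nat => h /andP[_ hh].
    by rewrite (nHom_at_nwalks h hi) subSn // (nWHom_at_nwalks _ hj).
  - exact: pathrel_irr.
  - exact: pathrel_irr.
rewrite nWHom_grid_sum sum2_palindrome; last 2 first.
- by move=> i j hi hj; apply: nWHom_grid_at_rev1.
- by move=> i j hi hj; apply: nWHom_grid_at_rev2.
rewrite !one_sub_signr_odd !natrD !natrM !natr_sum.
under eq_bigr do rewrite natr_sum.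
by field.
Qed.
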